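(* Consider the closed-loop system $\dot p=-R(p)^Te(p)-(L_o\otimes I_d)\bar p$, i.e. \[ \dot p_i=\sum_{j\in\mathcal{N}_i}(p_j-p_i)\big(\|p_j-p_i\|^2-d_{ij}^2\big)+\sum_{j\in\mathcal{N}_i^o}\Big((p_j-p_i)-(\hat p_j-\hat p_i)\Big),\quad i=1,\dots,n. \] This system is a gradient descent flow, $\dot p=-\nabla V(p)$, of the potential \[ V=\tfrac14\sum_{(i,j)\in\mathcal{E}}\big(\|p_i-p_j\|^2-d_{ij}^2\big)^2+\tfrac12\sum_{(i,j)\in\mathcal{E}_o}\big\|(p_j-p_i)-(\hat p_j-\hat p_i)\big\|^2, \] with $\dot V=-\|R^Te+(L_o\otimes I_d)\bar p\|^2\le 0$. Moreover, the induced dynamics of the relative position vector $z=(H\otimes I_d)p$ is self-contained, and its solutions converge to the largest invariant set contained in \[ \mathcal{O}(z)=\{z:\ R(z)^Te(z)+(L_o\otimes I_d)\bar p(z)=0\}. \]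
   Context: Let $d\in\{2,3\}$, $n\ge2$ agents with positions $p_i\in\mathbb{R}^d$, $p=[p_1^T,\dots,p_n^T]^T\in\mathbb{R}^{dn}$. $\mathcal{G}=(\mathcal{V},\mathcal{E})$ is an undirected graph on $\{1,\dots,n\}$ with $m$ edges, $\mathcal{N}_i=\{j:(i,j)\in\mathcal{E}\}$. Give each edge $k$ an arbitrary orientation with head $j$ and tail $i$; the incidence matrix $H\in\mathbb{R}^{m\times n}$ has $h_{ki}=1$ if edge $k$ sinks at $i$, $-1$ if it leaves $i$, $0$ otherwise. Then $z_k=p_j-p_i$, $z=[z_1^T,\dots,z_m^T]^T=(H\otimes I_d)p$, $Z(z)=\mathrm{diag}(z_1,\dots,z_m)\in\mathbb{R}^{dm\times m}$ (block diagonal), and the rigidity matrix is $R=Z(z)^T(H\otimes I_d)\in\mathbb{R}^{m\times dn}$. Each edge $k=(i,j)$ has desired distance $d_k=d_{ij}>0$ and squared distance error $e_k=\|p_i-p_j\|^2-d_k^2$, $e=[e_1,\dots,e_m]^T$. A set of orientation edges $\mathcal{E}_o\subseteq\mathcal{E}$ defines the undirected graph $\mathcal{G}_o=(\mathcal{V},\mathcal{E}_o)$ with neighbor sets $\mathcal{N}_i^o$ and Laplacian $L_o\in\mathbb{R}^{n\times n}$. Agents incident to some edge of $\mathcal{E}_o$ (orientation agents) are assigned points $\hat p_i\in\mathbb{R}^d$ so that $\hat p_j-\hat p_i$ is the desired relative position for $(i,j)\in\mathcal{E}_o$, with $\|\hat p_j-\hat p_i\|=d_{ij}$. Define $\bar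 p=[\bar p_1^T,\dots,\bar p_n^T]^T$ with $\bar p_i=p_i-\hat p_i$ for orientation agents and $\bar p_i=0$ otherwise; note $(L_o\otimes I_d)\bar p$ depends only on relative positions (hence on $z$). *)

From HB Require Import structures.
From mathcomp Require Import all_boot all_order all_algebra.
From mathcomp Require Import all_classical all_reals all_analysis.
Set Implicit Arguments. Unset Strict Implicit. Unset Printing Implicit Defensive.
Import Order.TTheory GRing.Theory Num.Theory.
Import numFieldNormedType.Exports.
Local Open Scope ring_scope.
Local Open Scope classical_set_scope.

(* Conventions:
   - positions p = [p_1^T; ...; p_n^T] are stored as an n x d matrix P
     whose i-th row is p_i^T (instead of the stacked vector in R^{dn});
     under this identification (H (x) I_d) p  <->  H *m P (row k = z_k^T)
     and (L_o (x) I_d) pbar <-> L_o *m Pbar.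
   - the graph has m edges k : 'I_m; edge k is oriented from tail [tl k]
     (= i) to head [hd k] (= j), so z_k = p_(hd k) - p_(tl k).
   - [dist k] is the desired distance d_k of edge k.
   - the orientation edges form a subset [Eo] of the edges. *)

Section Formation.
Variables (R : realType) (n d m : nat).
Variables (tl hd : 'I_m -> 'I_n) (dist : 'I_m -> R) (Eo : {set 'I_m}).
Variable (phat : 'I_n -> 'rV[R]_d).

Definition sqnorm (v : 'rV[R]_d) : R := \sum_(c < d) v 0 c ^+ 2.
Definition enorm (v : 'rV[R]_d) : R := Num.sqrt (sqnorm v).
Definition frob_dot (k l : nat) (A B : 'M[R]_(k, l)) : R :=
  \sum_(i < k) \sum_(c < l) A i c * B i c.
Definition frob_sqnorm (k l : nat) (A : 'M[R]_(k, l)) : R := frob_dot A A.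

Definition incidence : 'M[R]_(m, n) :=
  \matrix_(k < m, i < n)
    (if i == hd k then 1 else if i == tl k then -1 else 0).

Definition relpos (P : 'M[R]_(n, d)) : 'M[R]_(m, d) := incidence *m P.

Definition err (P : 'M[R]_(n, d)) (k : 'I_m) : R :=
  sqnorm (row (tl k) P - row (hd k) P) - dist k ^+ 2.

(* row k of the rigidity matrix R = Z(z)^T (H (x) I_d), reshaped as n x d:
   entry (i,c) is h_{ki} (z_k)_c *)
Definition rigidity_row (P : 'M[R]_(n, d)) (k : 'I_m) : 'M[R]_(n, d) :=
  \matrix_(i < n, c < d) (incidence k i * relpos P k c).

Definition rigT_err (P : 'M[R]_(n, d)) : 'M[R]_(n, d) :=
  \sum_(k < m) err P k *: rigidity_row P k.

Definition adj_o (i j : 'I_n) : bool :=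
  [exists k in Eo, ((tl k == i) && (hd k == j)) || ((tl k == j) && (hd k == i))].
Definition nbr_o (i : 'I_n) : {set 'I_n} := [set j | adj_o i j].
Definition lap_o : 'M[R]_n :=
  \matrix_(i < n, j < n)
    (if i == j then (#|nbr_o i|)%:R else - (adj_o i j)%:R).

Definition orient_agent (i : 'I_n) : bool :=
  [exists k in Eo, (tl k == i) || (hd k == i)].
Definition pbar (P : 'M[R]_(n, d)) : 'M[R]_(n, d) :=
  \matrix_(i < n, c < d) (if orient_agent i then P i c - phat i 0 c else 0).

Definition grad_term (P : 'M[R]_(n, d)) : 'M[R]_(n, d) :=
  rigT_err P + lap_o *m pbar P.

Definition closed_loop (P : 'M[R]_(n, d)) : 'M[R]_(n, d) := - grad_term P.

Definition potential (P : 'M[R]_(n, d)) : R :=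
  4^-1 * \sum_(k < m) err P k ^+ 2
  + 2^-1 * \sum_(k in Eo)
       sqnorm ((row (hd k) P - row (tl k) P) - (phat (hd k) - phat (tl k))).

Definition fwd_solution (p : R -> 'M[R]_(n, d)) : Prop :=
  (p t @[t --> 0^'+] --> p 0) /\
  forall t : R, 0 < t -> is_derive t (1 : R) p (closed_loop (p t)).

Definition full_solution (p : R -> 'M[R]_(n, d)) : Prop :=
  forall t : R, is_derive t (1 : R) p (closed_loop (p t)).

Definition O_set : set 'M[R]_(m, d) :=
  [set z | exists P, z = relpos P /\ grad_term P = 0].

Definition z_invariant (S : set 'M[R]_(m, d)) : Prop :=
  (forall p, fwd_solution p -> S (relpos (p 0)) ->
     forall t, 0 <= t -> S (relpos (p t))) /\
  (forall z0, S z0 -> exists p, full_solution p /\ relpos (p 0) = z0 /\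
     forall t, S (relpos (p t))).

Definition largest_invariant_in_O : set 'M[R]_(m, d) :=
  [set z | exists S, z_invariant S /\ S `<=` O_set /\ S z].

Definition converges_to_set (z : R -> 'M[R]_(m, d)) (M : set 'M[R]_(m, d)) :=
  forall eps : R, 0 < eps ->
    \forall t \near +oo, exists2 y, M y & Num.sqrt (frob_sqnorm (z t - y)) < eps.

End Formation.

(* The potential and the closed-loop field depend on the positions only through
   the relative positions [z = H p]: [V p = U (H p)] and
   [R^T e + (L_o (x) I_d) pbar = H^T A (H p)], where [A] is the gradient of the
   edge potential [U].  The chain rule through the linear map [H] makes the
   closed loop the gradient flow of [V], with [dV/dt = - |grad V|^2], and
   [z' = - H H^T A z] is self-contained.  As [V] decreases and [U] is coercive,
   [z] stays bounded.  On the compact set of bounded [z] in the range of [H] at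
   distance at least [e] from the equilibrium set [O] the gradient is bounded
   below, and [z] moves with bounded speed, so each visit far from [O] costs a
   fixed amount of potential: eventually [z] stays near [O].  Finally [O]
   consists of equilibria of the locally Lipschitz [z]-dynamics, so it is
   invariant and hence the largest invariant subset of itself. *)

From HB Require Import structures.
From mathcomp Require Import all_boot all_order all_algebra.
From mathcomp Require Import all_classical all_reals all_analysis.
From mathcomp Require Import ring lra.
Set Implicit Arguments. Unset Strict Implicit. Unset Printing Implicit Defensive.
Import Order.TTheory GRing.Theory Num.Theory.
Import numFieldNormedType.Exports.
Local Open Scope ring_scope.
Local Open Scope classical_set_scope.

Section Matrices.
Variable R : realType.

Lemma mx_norm_entry_le p q (X : 'M[R]_(p, q)) i j : `|X i j| <= `|X|.
Proof.
rewrite [leRHS]/Num.Def.normr /= mx_normrE; apply/bigmax_geP; right => /=.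
by exists (i, j).
Qed.

Lemma mx_norm_le p q (X : 'M[R]_(p, q)) b :
  0 <= b -> (forall i j, `|X i j| <= b) -> `|X| <= b.
Proof.
move=> b0 Xb; rewrite [leLHS]/Num.Def.normr /= mx_normrE.
by apply: bigmax_le => // -[i j] _; exact: Xb.
Qed.

Lemma ler_sum_term (I : finType) (F : I -> R) i :
  (forall j, 0 <= F j) -> F i <= \sum_j F j.
Proof. by move=> F0; rewrite (bigD1 i) //= lerDl sumr_ge0. Qed.

Lemma frob_sqnorm_ge0 p q (X : 'M[R]_(p, q)) : 0 <= frob_sqnorm X.
Proof.
by apply: sumr_ge0 => i _; apply: sumr_ge0 => j _; rewrite -expr2 sqr_ge0.
Qed.

Lemma mx_norm_sqr_le_frob p q (X : 'M[R]_(p, q)) : `|X| ^+ 2 <= frob_sqnorm X.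
Proof.
have [->|/mx_norm_neq0[[i j] /= Xij]] := eqVneq `|X| 0.
  by rewrite expr0n frob_sqnorm_ge0.
have -> : `|X| = `|X i j| by exact: Xij.
have row_ge0 i' : 0 <= \sum_c X i' c * X i' c.
  by apply: sumr_ge0 => c _; rewrite -expr2 sqr_ge0.
rewrite real_normK ?num_real // /frob_sqnorm /frob_dot.
apply: le_trans _ (ler_sum_term i row_ge0).
by rewrite expr2; apply: ler_sum_term => c; rewrite -expr2 sqr_ge0.
Qed.

Lemma frob_le_mx_norm_sqr p q (X : 'M[R]_(p, q)) :
  frob_sqnorm X <= (p * q)%:R * `|X| ^+ 2.
Proof.
have -> : (p * q)%:R * `|X| ^+ 2 = \sum_(i < p) \sum_(j < q) `|X| ^+ 2.
  under [RHS]eq_bigr do rewrite sumr_const card_ord.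
  by rewrite sumr_const card_ord -mulrnA mulr_natl mulnC.
apply: ler_sum => i _; apply: ler_sum => j _.
rewrite -expr2 -real_normK ?num_real // lerXn2r ?nnegrE //.
exact: mx_norm_entry_le.
Qed.

Definition mx_abs_sum p q (M : 'M[R]_(p, q)) := \sum_i \sum_j `|M i j|.

Lemma mx_abs_sum_ge0 p q (M : 'M[R]_(p, q)) : 0 <= mx_abs_sum M.
Proof. by apply: sumr_ge0 => *; apply: sumr_ge0. Qed.

Lemma mx_norm_mulmx_le p q r (M : 'M[R]_(p, q)) (X : 'M[R]_(q, r)) :
  `|M *m X| <= mx_abs_sum M * `|X|.
Proof.
apply: mx_norm_le => [|i c]; first by rewrite mulr_ge0 ?mx_abs_sum_ge0.
rewrite mxE; apply: le_trans (ler_norm_sum _ _ _) _.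
apply: (@le_trans _ _ (\sum_j `|M i j| * `|X|)).
  apply: ler_sum => j _; rewrite normrM ler_wpM2l //; exact: mx_norm_entry_le.
rewrite -mulr_suml ler_wpM2r //; apply: ler_sum_term => i'.
exact: sumr_ge0.
Qed.

Lemma frob_dotNl p q (X Y : 'M[R]_(p, q)) : frob_dot (- X) Y = - frob_dot X Y.
Proof.
rewrite /frob_dot -sumrN; apply: eq_bigr => i _; rewrite -sumrN.
by apply: eq_bigr => j _; rewrite mxE mulNr.
Qed.

Lemma frob_dotNr p q (X Y : 'M[R]_(p, q)) : frob_dot X (- Y) = - frob_dot X Y.
Proof.
rewrite /frob_dot -sumrN; apply: eq_bigr => i _; rewrite -sumrN.
by apply: eq_bigr => j _; rewrite mxE mulrN.
Qed.

Lemma frob_dot_mulmx p q r (A : 'M[R]_(p, r)) (B : 'M[R]_(p, q)) (C : 'M[R]_(q, r)) :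
  frob_dot A (B *m C) = frob_dot (B^T *m A) C.
Proof.
rewrite /frob_dot.
under eq_bigr do under eq_bigr do rewrite mxE mulr_sumr.
under [RHS]eq_bigr do under eq_bigr do rewrite mxE mulr_suml.
rewrite exchange_big /=; under eq_bigr do rewrite exchange_big /=.
rewrite exchange_big /=; apply: eq_bigr => j _; apply: eq_bigr => c _.
by apply: eq_bigr => i _; rewrite mxE; ring.
Qed.

End Matrices.

Section Topology.
Variable R : realType.

Lemma locally_lipschitz_continuous (V W : normedModType R) (f : V -> W) :
  (forall x, exists2 C, 0 <= C & exists2 r, 0 < r &
     forall y, `|x - y| < r -> `|f x - f y| <= C * `|x - y|) -> continuous f.
Proof.
move=> Hf x; apply/cvgrPdist_lt => e e0.
have [C C0 [r r0 Hr]] := Hf x.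
have C1 : 0 < C + 1 by rewrite ltr_wpDl.
have e1 : 0 < Num.min r (e / (C + 1)) by rewrite lt_min r0 divr_gt0.
near=> y.
have : `|x - y| < Num.min r (e / (C + 1)).
  near: y; have := near_ball x _ e1; rewrite -ball_normE /ball_ /=; exact.
rewrite lt_min ltr_pdivlMr // => /andP[xyr xye].
apply: le_lt_trans (Hr _ xyr) _.
have := normr_ge0 (x - y); nra.
Unshelve. all: by end_near.
Qed.

Lemma norm_subr_continuous (V : normedModType R) (y : V) :
  continuous (fun x => `|x - y|).
Proof.
apply: locally_lipschitz_continuous => x; exists 1 => //; exists 1 => // x' _.
by rewrite mul1r (le_trans (ler_dist_dist _ _)) // opprB addrA subrK.
Qed.

Lemma mulmx_continuous p q r (A : 'M[R]_(p, q)) :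
  continuous (mulmx A : 'M[R]_(q, r) -> 'M[R]_(p, r)).
Proof.
apply: locally_lipschitz_continuous => P; exists (mx_abs_sum A).
  exact: mx_abs_sum_ge0.
exists 1 => // Q _; rewrite -mulmxBr; exact: mx_norm_mulmx_le.
Qed.

Lemma mx_bounded_closed_compact p q (S : set 'M[R]_(p, q)) B :
  (forall z, S z -> `|z| <= B) -> closed S -> compact S.
Proof.
move=> SB Scl.
have vec_mx_cont : continuous (@vec_mx R p q).
  apply: locally_lipschitz_continuous => u; exists 1 => //; exists 1 => // v _.
  rewrite mul1r; apply: mx_norm_le => // i j; rewrite !mxE.
  by have := mx_norm_entry_le (u - v) 0 (mxvec_index i j); rewrite !mxE.
set S' := (@vec_mx R p q) @^-1` S.
have S'cl : closed S' by move: Scl; apply: (continuous_closedP _).1.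
have S'b : bounded_set S'.
  exists B; split; first exact: num_real.
  move=> M BM v S'v; apply: le_trans (ltW BM).
  apply: le_trans (SB _ S'v); apply: mx_norm_le => // i k.
  rewrite [i]ord1 -{1}(vec_mxK v); case/mxvec_indexP: k => a b.
  by rewrite mxvecE; exact: mx_norm_entry_le.
have := continuous_compact (continuous_subspaceT vec_mx_cont)
  (bounded_closed_compact S'b S'cl).
congr compact; apply/seteqP; split => [z [v S'v <-]//|z Sz].
by exists (mxvec z); rewrite /S' /= mxvecK.
Qed.

(* [(pinvmx A^T *m A^T)^T] is a projection onto the column space of [A]. *)
Lemma mulmx_rangeP p q r (A : 'M[R]_(p, q)) (X : 'M[R]_(p, r)) :
  (exists Y, X = A *m Y) <-> X = (pinvmx A^T *m A^T)^T *m X.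
Proof.
rewrite trmx_mul trmxK; split=> [[Y ->]|eX]; last first.
  by exists ((pinvmx A^T)^T *m X); rewrite mulmxA.
apply: trmx_inj; rewrite [RHS]trmx_mul (trmx_mul A (pinvmx A^T)^T) trmxK.
by rewrite trmx_mul mulmxA mulmxKpV // submxMl.
Qed.

Lemma mulmx_range_closed p q r (A : 'M[R]_(p, q)) :
  closed [set X : 'M[R]_(p, r) | exists Y, X = A *m Y].
Proof.
set Pi := (pinvmx A^T *m A^T)^T.
have -> : [set X : 'M[R]_(p, r) | exists Y, X = A *m Y] =
          (fun X => `|(1%:M - Pi) *m X|) @^-1` [set x | x <= 0].
  apply/seteqP; split => X /=; rewrite mulmx_rangeP normr_le0 mulmxBl mul1mx subr_eq0.
    by move=> <-.
  by move/eqP.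
apply: (continuous_closedP _).1; last exact: closed_le.
move=> X; exact: (continuous_comp (@mulmx_continuous _ _ r (1%:M - Pi) X)
  (@norm_continuous _ _ _)).
Qed.

Lemma compact_min_gt0 (T : topologicalType) (f : T -> R) (S : set T) :
  compact S -> {within S, continuous f} -> (forall x, S x -> 0 < f x) ->
  exists2 delta, 0 < delta & forall x, S x -> delta <= f x.
Proof.
move=> Scp fc fpos; have [[x Sx]|S0] := pselect (S !=set0); last first.
  by exists 1 => // x Sx; case: S0; exists x.
have [c /set_mem Sc cmin] := compact_EVT_min (ex_intro _ x Sx) Scp fc.
by exists (f c); [exact: fpos|move=> y Sy; apply: cmin; apply/mem_set].
Qed.

End Topology.

Section Derivatives.
Variable R : realType.

Lemma is_derive_linear (V W : normedModType R) (f : {linear V -> W}) x v :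
  continuous f -> is_derive x v f (f v).
Proof.
move=> fc; apply: DeriveDef; first exact/diff_derivable/linear_differentiable.
by rewrite deriveE ?diff_lin //; exact: linear_differentiable.
Qed.

Lemma is_derive_comp_diff (U V W : normedModType R) (f : V -> W) (g : U -> V)
    x v dg df :
  differentiable g x -> differentiable f (g x) ->
  is_derive x v g dg -> is_derive (g x) dg f df -> is_derive x v (f \o g) df.
Proof.
move=> gd fd gdg fdf; have fgd : differentiable (f \o g) x.
  exact: differentiable_comp.
apply: DeriveDef; first exact: diff_derivable.
rewrite deriveE // diff_comp //= -(deriveE _ gd) (@derive_val _ _ _ _ _ _ _ gdg).
rewrite -deriveE //.
exact: derive_val.
Qed.

Lemma is_derive_mx_entry (V : normedModType R) p q (f : V -> 'M[R]_(p, q))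
    x v D i j :
  is_derive x v f D -> is_derive x v (fun y => f y i j) (D i j).
Proof.
move=> fD; have df : derivable f x v by exact: ex_derive.
apply: DeriveDef; first exact: (derivable_mxP f x v).1 df i j.
by have := derive_mx df; rewrite (@derive_val _ _ _ _ _ _ _ fD) => ->; rewrite mxE.
Qed.

Section Pointwise.
Variables (V : normedModType R) (x v : V).
Implicit Types (f g : V -> R) (df dg : R).

Lemma is_deriveD_pt f g df dg :
  is_derive x v f df -> is_derive x v g dg ->
  is_derive x v (fun y => f y + g y) (df + dg).
Proof. exact: is_deriveD. Qed.

Lemma is_derive_sumr_pt (I : Type) {r : seq I} (P : pred I)
    (F : I -> V -> R) (dF : I -> R) :
  (forall i, P i -> is_derive x v (F i) (dF i)) ->
  is_derive x v (fun y => \sum_(i <- r | P i) F i y) (\sum_(i <- r | P i) dF i).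
Proof.
move=> FdF; elim: r => [|a r IH].
  rewrite big_nil (_ : (fun _ => _) = cst 0); first exact: is_derive_cst.
  by apply/funext => y; rewrite big_nil.
rewrite big_cons (_ : (fun _ => _) = (fun y =>
    (if P a then F a y else 0) + \sum_(i <- r | P i) F i y)); last first.
  by apply/funext => y; rewrite big_cons; case: (P a); rewrite ?add0r.
case Pa: (P a); first exact: is_deriveD_pt (FdF a Pa) IH.
by rewrite -[X in is_derive _ _ _ X]add0r; apply: is_deriveD_pt IH.
Qed.

Lemma is_derive_sqr_pt f df :
  is_derive x v f df -> is_derive x v (fun y => f y ^+ 2) (2 * f x * df).
Proof.
move=> fdf; rewrite (_ : (fun _ => _) = f * f); last first.
  by apply/funext => y; rewrite expr2.
by apply: is_derive_eq (is_deriveM fdf fdf) _; rewrite /GRing.scale /=; ring.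
Qed.

Lemma is_derive_mulr_pt (a : R) f df :
  is_derive x v f df -> is_derive x v (fun y => a * f y) (a * df).
Proof. exact: is_deriveZ. Qed.

Lemma differentiableD_pt f g : differentiable f x -> differentiable g x ->
  differentiable (fun y => f y + g y) x.
Proof. exact: differentiableD. Qed.

Lemma differentiable_sumr_pt (I : Type) {r : seq I} (P : pred I)
    (F : I -> V -> R) :
  (forall i, P i -> differentiable (F i) x) ->
  differentiable (fun y => \sum_(i <- r | P i) F i y) x.
Proof.
move=> Fd; elim: r => [|a r IH].
  rewrite (_ : (fun _ => _) = cst 0); first exact: differentiable_cst.
  by apply/funext => y; rewrite big_nil.
rewrite (_ : (fun _ => _) = (fun y =>
    (if P a then F a y else 0) + \sum_(i <- r | P i) F i y)); last first.
  by apply/funext => y; rewrite big_cons; case: (P a); rewrite ?add0r.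
case Pa: (P a); first exact: differentiableD_pt (Fd a Pa) IH.
exact: differentiableD_pt IH.
Qed.

Lemma differentiable_mulr_pt (a : R) f :
  differentiable f x -> differentiable (fun y => a * f y) x.
Proof. exact: differentiableM (differentiable_cst a x). Qed.

Lemma differentiable_sqr_pt f :
  differentiable f x -> differentiable (fun y => f y ^+ 2) x.
Proof.
move=> fd; rewrite (_ : (fun _ => _) = f * f); first exact: differentiableM.
by apply/funext => y; rewrite expr2.
Qed.

End Pointwise.
End Derivatives.

Section Curves.
Variables (R : realType) (p q : nat).
Implicit Types (z dz : R -> 'M[R]_(p, q)).

Lemma mx_curve_increment_le z dz s t M :
  s < t -> {within `[s, t], continuous z} ->
  (forall u, u \in `]s, t[%R -> is_derive u 1 z (dz u)) ->
  (forall u, u \in `]s, t[%R -> `|dz u| <= M) ->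
  `|z t - z s| <= M * (t - s).
Proof.
move=> st zc zd dzM.
have M0 : 0 <= M.
  have mid : (s + t) / 2 \in `]s, t[%R by rewrite in_itv /=; apply/andP; split; lra.
  exact: le_trans (normr_ge0 _) (dzM _ mid).
apply: mx_norm_le => [|k c]; first by rewrite mulr_ge0 // subr_ge0 ltW.
have zkc_cont : {within `[s, t], continuous (fun u => z u k c)}.
  by move=> u; apply: continuous_comp (zc u) (@coord_continuous _ _ _ k c _).
have [u uin zkcE] := MVT st (fun u uin => is_derive_mx_entry k c (zd u uin)) zkc_cont.
rewrite !mxE zkcE normrM (@gtr0_norm _ (t - s)) ?subr_gt0 //.
apply: ler_wpM2r; first by rewrite subr_ge0 ltW.
exact: le_trans (mx_norm_entry_le _ k c) (dzM _ uin).
Qed.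

Section Stationary.
Variables (z dz : R -> 'M[R]_(p, q)) (z0 : 'M[R]_(p, q)) (L : R).
Hypothesis L0 : 0 <= L.
Hypothesis z_cont : forall a b : R, 0 <= a -> a < b -> {within `[a, b], continuous z}.
Hypothesis z_der : forall t : R, 0 < t -> is_derive t 1 z (dz t).
Hypothesis dz_le : forall t : R, 0 < t -> `|dz t| <= L * `|z t - z0|.

Let s := (2 * (L + 1))^-1.

Let s_gt0 : 0 < s. Proof. by rewrite invr_gt0 mulr_gt0 // ltr_wpDl. Qed.

Let Ls_le : L * s <= 2^-1.
Proof.
rewrite ler_pdivrMr ?mulr_gt0 ?ltr_wpDl //; lra.
Qed.

(* On [t0, t0 + s] the deviation from [z0] is at most half of its own maximum,
   hence zero. *)
Lemma mx_curve_stationary_step t0 : 0 <= t0 -> z t0 = z0 ->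
  forall t, t0 <= t -> t <= t0 + s -> z t = z0.
Proof.
move=> t00 zt0; have ts : t0 < t0 + s by rewrite ltrDl.
have dev_cont : {within `[t0, t0 + s], continuous (fun u => `|z u - z0|)}.
  move=> u; exact: (continuous_comp (@z_cont _ _ t00 ts u)
    (@norm_subr_continuous _ _ z0 (z u))).
have [um umI umax] := EVT_max (ltW ts) dev_cont.
set Mx := `|z um - z0| in umax.
have Mx0 : 0 <= Mx by exact: normr_ge0.
have half u : u \in `[t0, t0 + s]%R -> `|z u - z0| <= Mx / 2.
  rewrite in_itv /= => /andP[]; rewrite le_eqVlt => /orP[/eqP<- _|t0u us].
    by rewrite zt0 subrr normr0 divr_ge0.
  rewrite -[X in z u - X]zt0.
  apply: le_trans (mx_curve_increment_le (M := L * Mx) t0u _ _ _) _.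
  - by apply: z_cont.
  - by move=> w; rewrite in_itv /= => /andP[t0w _]; apply: z_der; lra.
  - move=> w; rewrite in_itv /= => /andP[t0w wu].
    apply: le_trans (dz_le _) _; first lra.
    by rewrite ler_wpM2l // umax // in_itv /=; apply/andP; split; lra.
  apply: (@le_trans _ _ (L * Mx * s)).
    by apply: ler_wpM2l; [exact: mulr_ge0|lra].
  by have := Ls_le; nra.
have Mx_le0 : Mx <= 0 by have := half _ umI; rewrite -/Mx; lra.
move=> t t0t tts; apply/eqP; rewrite -subr_eq0 -normr_le0.
by apply: le_trans Mx_le0; apply: umax; rewrite in_itv /= t0t.
Qed.

Lemma mx_curve_stationary : z 0 = z0 -> forall t, 0 <= t -> z t = z0.
Proof.
move=> zz0.
suff stat j : forall t, 0 <= t -> t <= j%:R * s -> z t = z0.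
  move=> t t0; apply: (stat (Num.Def.archi_bound (t / s))) => //.
  by have := archi_boundP (divr_ge0 t0 (ltW s_gt0)); rewrite ltr_pdivrMr // => /ltW.
elim: j => [|j IH] t t0 tj; first by have -> : t = 0 by move: tj; rewrite mul0r; lra.
have [tjs|jst] := leP t (j%:R * s); first exact: IH.
have js0 : 0 <= j%:R * s by rewrite mulr_ge0 // ltW.
apply: (mx_curve_stationary_step js0 (IH _ js0 (lexx _))); first exact: ltW.
by move: tj; rewrite -natr1 mulrDl mul1r.
Qed.

End Stationary.
End Curves.

Section Incidence.
Variables (R : realType) (n d m : nat).
Variables (tl hd : 'I_m -> 'I_n) (Eo : {set 'I_m}).
Hypothesis tl_neq_hd : forall k, tl k != hd k.
Hypothesis edge_uniq : forall k l, [set tl k; hd k] = [set tl l; hd l] -> k = l.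

Local Notation H := (incidence R tl hd).

Definition joins k i j := ((tl k == i) && (hd k == j)) || ((tl k == j) && (hd k == i)).

Lemma incidenceE k i :
  H k i = (if i == hd k then 1 else if i == tl k then -1 else 0).
Proof. by rewrite mxE. Qed.

Lemma sum_incidence k (x : 'I_n -> R) :
  \sum_i H k i * x i = x (hd k) - x (tl k).
Proof.
rewrite (bigD1 (hd k)) //= (bigD1 (tl k)) /=; last by rewrite tl_neq_hd.
rewrite big1 => [|i /andP[nit nih]]; last first.
  by rewrite incidenceE (negbTE nit) (negbTE nih) mul0r.
by rewrite !incidenceE eqxx (negbTE (tl_neq_hd k)) eqxx; lra.
Qed.

Lemma relposE (P : 'M[R]_(n, d)) k c :
  relpos tl hd P k c = P (hd k) c - P (tl k) c.
Proof. by rewrite mxE sum_incidence. Qed.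

Lemma incidence_sqr k i : H k i * H k i = ((tl k == i) || (hd k == i))%:R.
Proof.
have /eqP tlhd := tl_neq_hd k; rewrite incidenceE [tl k == i]eq_sym [hd k == i]eq_sym.
case: (i =P hd k) => [ih|_]; case: (i =P tl k) => [it|_] => /=;
  rewrite ?mulrNN ?mulr1 ?mul0r ?mulr1n ?mulr0n //; congruence.
Qed.

Lemma incidence_mul_neq k i j : i != j -> H k i * H k j = - (joins k i j)%:R.
Proof.
move=> /eqP nij; have /eqP tlhd := tl_neq_hd k; rewrite !incidenceE /joins.
rewrite [tl k == i]eq_sym [hd k == j]eq_sym [tl k == j]eq_sym [hd k == i]eq_sym.
case: (i =P hd k) => [ih|_]; case: (i =P tl k) => [it|_];
case: (j =P hd k) => [jh|_]; case: (j =P tl k) => [jt|_] => /=;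
  rewrite ?mulrNN ?mulr1 ?mul1r ?mulr0 ?mul0r ?mulrN ?mulNr ?mulr1n ?mulr0n ?oppr0 //;
  congruence.
Qed.

Lemma joins_pair k i j : joins k i j -> [set tl k; hd k] = [set i; j].
Proof. by case/orP=> /andP[/eqP-> /eqP->] //; exact: setUC. Qed.

Lemma adj_oP i j :
  reflect (exists2 k, k \in Eo & joins k i j) (adj_o tl hd Eo i j).
Proof.
apply: (iffP existsP) => [[k /andP[kE b]]|[k kE b]]; first by exists k.
by exists k; rewrite kE.
Qed.

Lemma card_nbr_o i :
  #|nbr_o tl hd Eo i| = #|[set k in Eo | (tl k == i) || (hd k == i)]|.
Proof.
pose other k := if tl k == i then hd k else tl k.
set S := [set k in Eo | _].
have pair_other k : k \in S -> [set tl k; hd k] = [set i; other k].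
  rewrite inE /other => /andP[_]; case: (tl k =P i) => [->|_] //= /eqP ->.
  exact: setUC.
have -> : nbr_o tl hd Eo i = other @: S.
  apply/setP => x; rewrite inE; apply/adj_oP/imsetP.
  - case=> k kE b; exists k.
      by rewrite inE kE /=; case/orP: b => /andP[/eqP-> /eqP->]; rewrite eqxx ?orbT.
    rewrite /other; case/orP: b => /andP[/eqP ti /eqP hx]; first by rewrite ti eqxx.
    case: (tl k =P i) => [ti'|//]; case/eqP: (tl_neq_hd k); congruence.
  - case=> k; rewrite inE => /andP[kE b] ->; exists k => //.
    rewrite /joins /other; case: (tl k =P i) => [->|ne]; first by rewrite !eqxx.
    by move: b; rewrite (introF eqP ne) /= eqxx.
rewrite card_in_imset // => k l kS lS e.
by apply: edge_uniq; rewrite (pair_other _ kS) (pair_other _ lS) e.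
Qed.

Lemma sum_joins i j : \sum_(k in Eo) (joins k i j)%:R = (adj_o tl hd Eo i j)%:R :> R.
Proof.
case: (adj_oP i j) => [[k0 k0E b0]|nadj]; last first.
  by rewrite big1 // => l lE; case bl: (joins l i j) => //; case: nadj; exists l.
rewrite (bigD1 k0) //= b0 big1 ?addr0 // => l /andP[lE nl].
case bl: (joins l i j) => //; case/eqP: nl.
by apply: edge_uniq; rewrite (joins_pair b0) (joins_pair bl).
Qed.

Lemma lap_oE i j : lap_o R tl hd Eo i j = \sum_(k in Eo) H k i * H k j.
Proof.
rewrite mxE; have [<-|nij] := eqVneq i j.
  under eq_bigr do rewrite incidence_sqr.
  rewrite card_nbr_o -natr_sum -sum1_card; congr (_%:R).
  rewrite big_mkcond [RHS]big_mkcond /=; apply: eq_bigr => k _.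
  by rewrite inE; case: (k \in Eo); case: (_ || _).
by under eq_bigr do rewrite incidence_mul_neq //; rewrite sumrN sum_joins.
Qed.

End Incidence.

Section EdgeDynamics.
Variables (R : realType) (n d m : nat).
Variables (tl hd : 'I_m -> 'I_n) (dist : 'I_m -> R) (Eo : {set 'I_m}).
Variable phat : 'I_n -> 'rV[R]_d.
Hypothesis tl_neq_hd : forall k, tl k != hd k.
Hypothesis edge_uniq : forall k l, [set tl k; hd k] = [set tl l; hd l] -> k = l.

Local Notation H := (incidence R tl hd).

Definition edge_target k : 'rV[R]_d := phat (hd k) - phat (tl k).

Definition edge_err (z : 'M[R]_(m, d)) k := \sum_(c < d) z k c ^+ 2 - dist k ^+ 2.

Definition edge_field (z : 'M[R]_(m, d)) : 'M[R]_(m, d) :=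
  \matrix_(k, c) (edge_err z k * z k c + (k \in Eo)%:R * (z k c - edge_target k 0 c)).

Definition edge_potential (z : 'M[R]_(m, d)) : R :=
  4^-1 * \sum_k edge_err z k ^+ 2
  + 2^-1 * \sum_(k in Eo) \sum_(c < d) (z k c - edge_target k 0 c) ^+ 2.

Lemma errE (P : 'M[R]_(n, d)) k : err tl hd dist P k = edge_err (relpos tl hd P) k.
Proof.
congr (_ - _); apply: eq_bigr => c _.
by rewrite relposE // !mxE -sqrrN opprB.
Qed.

Lemma potentialE (P : 'M[R]_(n, d)) :
  potential tl hd dist Eo phat P = edge_potential (relpos tl hd P).
Proof.
congr (_ * _ + _ * _); first by apply: eq_bigr => k _; rewrite errE.
apply: eq_bigr => k _; apply: eq_bigr => c _.
by rewrite relposE // !mxE.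
Qed.

Lemma orient_agent_tl k : k \in Eo -> orient_agent tl hd Eo (tl k).
Proof. by move=> kE; apply/existsP; exists k; rewrite kE eqxx. Qed.

Lemma orient_agent_hd k : k \in Eo -> orient_agent tl hd Eo (hd k).
Proof. by move=> kE; apply/existsP; exists k; rewrite kE eqxx orbT. Qed.

(* With [L_o = H^T diag(Eo) H] both terms are [H^T] applied to an edge quantity. *)
Lemma grad_termE (P : 'M[R]_(n, d)) :
  grad_term tl hd dist Eo phat P = H^T *m edge_field (relpos tl hd P).
Proof.
apply/matrixP => i c.
rewrite /grad_term [LHS]mxE /rigT_err summxE [(lap_o _ _ _ _ *m _) i c]mxE.
under [X in X + _ = _]eq_bigr do rewrite mxE /rigidity_row mxE.
under [X in _ + X = _]eq_bigr do rewrite lap_oE // mulr_suml.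
rewrite exchange_big /=.
under [X in _ + X = _]eq_bigr => k kE.
  under eq_bigr do rewrite -mulrA.
  rewrite -mulr_sumr sum_incidence // !mxE (orient_agent_tl kE) (orient_agent_hd kE).
  over.
rewrite [RHS]mxE.
under [RHS]eq_bigr do rewrite [_^T _ _]mxE [edge_field _ _ _]mxE mulrDr.
rewrite big_split /=; congr (_ + _).
  by apply: eq_bigr => k _; rewrite errE; ring.
rewrite [LHS]big_mkcond /=; apply: eq_bigr => k _.
case: (k \in Eo) => /=; last by rewrite mul0r mulr0.
by rewrite mul1r relposE // /edge_target !mxE; congr (_ * _); ring.
Qed.

Lemma edge_potential_ge0 z : 0 <= edge_potential z.
Proof.
rewrite addr_ge0 // mulr_ge0 //; apply: sumr_ge0 => k _; rewrite ?sqr_ge0 //.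
by apply: sumr_ge0 => c _; rewrite sqr_ge0.
Qed.

Lemma mx_norm_le_of_edge_potential_le z U :
  edge_potential z <= U -> `|z| <= 2 + 4 * U + \sum_k dist k ^+ 2.
Proof.
move=> zU; have U0 : 0 <= U := le_trans (edge_potential_ge0 z) zU.
apply: mx_norm_le => [|k c].
  by rewrite !addr_ge0 ?mulr_ge0 // sumr_ge0 // => *; rewrite sqr_ge0.
have errU : edge_err z k ^+ 2 <= 4 * U.
  apply: le_trans (ler_sum_term k (fun k => sqr_ge0 (edge_err z k))) _.
  suff : 4^-1 * \sum_k edge_err z k ^+ 2 <= U by lra.
  apply: le_trans zU; rewrite lerDl mulr_ge0 //.
  by apply: sumr_ge0 => *; apply: sumr_ge0 => *; rewrite sqr_ge0.
have zkc : z k c ^+ 2 <= \sum_(c0 < d) z k c0 ^+ 2.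
  by apply: ler_sum_term => *; rewrite sqr_ge0.
have distk := ler_sum_term k (fun k => sqr_ge0 (dist k)).
have /= errE' : edge_err z k = \sum_(c0 < d) z k c0 ^+ 2 - dist k ^+ 2 by [].
rewrite -[z k c ^+ 2](real_normK (num_real _)) in zkc.
set x := `|z k c| in zkc *; set e := edge_err z k in errU errE'.
have x_le : x <= 1 + x ^+ 2 by nra.
have e_le : e <= 1 + e ^+ 2 by nra.
lra.
Qed.

Lemma is_derive_edge_potential z w :
  is_derive z w edge_potential (frob_dot (edge_field z) w).
Proof.
have coord k c : is_derive z w (fun y : 'M[R]_(m, d) => y k c) (w k c).
  exact: (is_derive_mx_entry k c (is_derive_id z w)).
have err_der k : is_derive z w (fun y => edge_err y k) (\sum_c 2 * z k c * w k c).
  rewrite /edge_err; apply: is_derive_eq; first exact: is_deriveD_pt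
    (is_derive_sumr_pt (fun c _ => is_derive_sqr_pt (coord k c)))
    (is_derive_cst (- dist k ^+ 2) z w).
  by rewrite addr0.
have target_der k c :
    is_derive z w (fun y : 'M[R]_(m, d) => (y k c - edge_target k 0 c) ^+ 2)
    (2 * (z k c - edge_target k 0 c) * w k c).
  have := is_deriveD_pt (coord k c) (is_derive_cst (- edge_target k 0 c) z w).
  by move/is_derive_sqr_pt; rewrite addr0.
have sum_err_der := is_derive_sumr_pt (r := index_enum 'I_m) (P := xpredT)
  (fun k _ => is_derive_sqr_pt (err_der k)).
have sum_target_der := is_derive_sumr_pt (r := index_enum 'I_m) (P := fun k => k \in Eo)
  (fun k _ => is_derive_sumr_pt (r := index_enum 'I_d) (P := xpredT)
    (fun c _ => target_der k c)).
have := is_deriveD_pt (is_derive_mulr_pt 4^-1 sum_err_der)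
                      (is_derive_mulr_pt 2^-1 sum_target_der).
move/is_derive_eq; apply.
rewrite /frob_dot; under [RHS]eq_bigr do under eq_bigr do rewrite mxE mulrDl.
under [RHS]eq_bigr do rewrite big_split /=.
rewrite big_split /= !mulr_sumr; congr (_ + _).
  by apply: eq_bigr => k _; rewrite !mulr_sumr; apply: eq_bigr => c _; field.
rewrite big_mkcond /=; apply: eq_bigr => k _.
case: (k \in Eo) => /=; last by rewrite big1 // => c _; rewrite !mul0r.
by rewrite !mulr_sumr; apply: eq_bigr => c _; field.
Qed.

Lemma differentiable_edge_potential z : differentiable edge_potential z.
Proof.
have coord k c : differentiable (fun y : 'M[R]_(m, d) => y k c) z.
  exact: differentiable_coord.
have err_diff k : differentiable (fun y => edge_err y k) z.
  apply: differentiableD_pt (differentiable_cst _ _).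
  by apply: differentiable_sumr_pt => c _; apply: differentiable_sqr_pt.
apply: differentiableD_pt; apply: differentiable_mulr_pt;
  apply: differentiable_sumr_pt => k _.
  exact: differentiable_sqr_pt.
apply: differentiable_sumr_pt => c _; apply: differentiable_sqr_pt.
exact: differentiableD_pt (differentiable_cst _ _).
Qed.

Lemma edge_err_norm_le z B k :
  `|z| <= B -> `|edge_err z k| <= d%:R * B ^+ 2 + dist k ^+ 2.
Proof.
move=> zB; apply: le_trans (ler_normB _ _) _.
rewrite ger0_norm ?sumr_ge0 // => [|c _]; last exact: sqr_ge0.
rewrite ger0_norm ?sqr_ge0 // lerD2r.
have -> : d%:R * B ^+ 2 = \sum_(c < d) B ^+ 2 by rewrite sumr_const card_ord mulr_natl.
apply: ler_sum => c _; rewrite -real_normK ?num_real //.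
have zc := le_trans (mx_norm_entry_le _ k c) zB.
have B0 := le_trans (normr_ge0 _) zc.
by rewrite lerXn2r ?nnegrE.
Qed.

Lemma edge_err_lipschitz z z' B k : `|z| <= B -> `|z'| <= B ->
  `|edge_err z k - edge_err z' k| <= 2 * d%:R * B * `|z - z'|.
Proof.
move=> zB z'B.
have -> : edge_err z k - edge_err z' k = \sum_(c < d) (z k c - z' k c) * (z k c + z' k c).
  rewrite /edge_err opprB addrA subrK -sumrB; apply: eq_bigr => c _; ring.
apply: le_trans (ler_norm_sum _ _ _) _.
have -> : 2 * d%:R * B * `|z - z'| = \sum_(c < d) (`|z - z'| * (2 * B)).
  by rewrite sumr_const card_ord -mulr_natl; ring.
apply: ler_sum => c _; rewrite normrM.
have dc : `|z k c - z' k c| <= `|z - z'|.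
  by have := mx_norm_entry_le (z - z') k c; rewrite !mxE.
have sc : `|z k c + z' k c| <= 2 * B.
  apply: le_trans (ler_normD _ _) _.
  have := le_trans (mx_norm_entry_le _ k c) zB.
  have := le_trans (mx_norm_entry_le _ k c) z'B; lra.
have := ler_pM (normr_ge0 _) (normr_ge0 _) dc sc; lra.
Qed.

Lemma edge_field_lipschitz B : exists2 L, 0 <= L & forall z z',
  `|z| <= B -> `|z'| <= B -> `|edge_field z - edge_field z'| <= L * `|z - z'|.
Proof.
pose D := \sum_k dist k ^+ 2.
have D0 : 0 <= D by apply: sumr_ge0 => *; exact: sqr_ge0.
have distD k : dist k ^+ 2 <= D by apply: ler_sum_term => *; exact: sqr_ge0.
have L0 : 0 <= d%:R * B ^+ 2 + D + 2 * d%:R * B ^+ 2 + 1.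
  have := sqr_ge0 B; have : 0 <= d%:R :> R := ler0n _ _; nra.
exists (d%:R * B ^+ 2 + D + 2 * d%:R * B ^+ 2 + 1) => // z z' zB z'B.
apply: mx_norm_le => [|k c]; first by rewrite mulr_ge0 ?normr_ge0.
have -> : (edge_field z - edge_field z') k c = edge_field z k c - edge_field z' k c.
  by rewrite !mxE.
rewrite ![edge_field _ k c]mxE.
set e := (k \in Eo)%:R; set t := edge_target k 0 c.
have -> : edge_err z k * z k c + e * (z k c - t)
      - (edge_err z' k * z' k c + e * (z' k c - t))
    = edge_err z k * (z k c - z' k c) + (edge_err z k - edge_err z' k) * z' k c
      + e * (z k c - z' k c) by ring.
have e1 : `|e| <= 1 by rewrite /e; case: (k \in Eo); rewrite ?normr1 ?normr0.
have dc : `|z k c - z' k c| <= `|z - z'|.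
  by have := mx_norm_entry_le (z - z') k c; rewrite !mxE.
have z'c : `|z' k c| <= B := le_trans (mx_norm_entry_le _ k c) z'B.
have errk := le_trans (edge_err_norm_le k zB) (lerD (lexx _) (distD k)).
have errd := edge_err_lipschitz k zB z'B.
apply: le_trans (ler_normD _ _) _; apply: le_trans (lerD (ler_normD _ _) (lexx _)) _.
rewrite !normrM.
have p1 := ler_pM (normr_ge0 _) (normr_ge0 _) errk dc.
have p2 := ler_pM (normr_ge0 _) (normr_ge0 _) errd z'c.
have p3 := ler_pM (normr_ge0 _) (normr_ge0 _) e1 dc.
set N := `|z - z'| in p1 p2 p3 *; have N0 : 0 <= N := normr_ge0 _.
nra.
Qed.

End EdgeDynamics.

Section Gradient.
Variables (R : realType) (n d m : nat).
Variables (tl hd : 'I_m -> 'I_n) (dist : 'I_m -> R) (Eo : {set 'I_m}).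
Variable phat : 'I_n -> 'rV[R]_d.
Hypothesis tl_neq_hd : forall k, tl k != hd k.
Hypothesis edge_uniq : forall k l, [set tl k; hd k] = [set tl l; hd l] -> k = l.

Local Notation H := (incidence R tl hd).
Local Notation V := (potential tl hd dist Eo phat).
Local Notation F := (closed_loop tl hd dist Eo phat).
Local Notation G := (grad_term tl hd dist Eo phat).
Local Notation U := (edge_potential tl hd dist Eo phat).

Lemma potential_mulmxE : V = U \o mulmx H.
Proof. by apply/funext => P; rewrite /= potentialE. Qed.

Lemma differentiable_potential P : differentiable V P.
Proof.
rewrite potential_mulmxE; apply: differentiable_comp.
  exact/linear_differentiable/mulmx_continuous.
exact: differentiable_edge_potential.
Qed.

Lemma continuous_potential : continuous V.
Proof. by move=> P; exact/differentiable_continuous/differentiable_potential. Qed.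

Lemma is_derive_potential P h : is_derive P h V (- frob_dot (F P) h).
Proof.
rewrite frob_dotNl opprK grad_termE // -frob_dot_mulmx potential_mulmxE.
apply: is_derive_comp_diff.
- exact/linear_differentiable/mulmx_continuous.
- exact: differentiable_edge_potential.
- by apply: (is_derive_linear (f := mulmx H)); exact: mulmx_continuous.
- exact: is_derive_edge_potential.
Qed.

Lemma is_derive_potential_solution (p : R -> 'M[R]_(n, d)) (t : R) :
  is_derive t (1 : R) p (F (p t)) ->
  is_derive t (1 : R) (V \o p) (- frob_sqnorm (G (p t))).
Proof.
move=> pd; have pdiff : differentiable p t by apply/derivable1_diffP; exact: ex_derive.
apply: is_derive_eq.
  exact: is_derive_comp_diff pdiff (differentiable_potential _) pd
    (is_derive_potential _ _).
by rewrite frob_dotNl frob_dotNr opprK.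
Qed.

Definition edge_flow (z : 'M[R]_(m, d)) : 'M[R]_(m, d) :=
  - (H *m (H^T *m edge_field tl hd dist Eo phat z)).

Lemma relpos_closed_loop P : H *m F P = edge_flow (H *m P).
Proof. by rewrite /closed_loop grad_termE // mulmxN. Qed.

End Gradient.

Lemma converges_to_set_mx_norm (R : realType) p q (z : R -> 'M[R]_(p, q)) S :
  (forall eps : R, 0 < eps ->
     \forall t \near +oo, exists2 y, S y & `|z t - y| < eps) ->
  converges_to_set z S.
Proof.
move=> zS eps eps0; set N : R := (p * q)%:R.
have N0 : 0 <= N by rewrite /N ler0n.
apply: filterS (zS (eps / (N + 1)) _); last by rewrite divr_gt0 // ltr_wpDl.
move=> t [y Sy zy]; exists y => //.
rewrite -(ger0_norm (ltW eps0)) -sqrtr_sqr ltr_sqrt ?exprn_gt0 //.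
apply: le_lt_trans (frob_le_mx_norm_sqr _) _; rewrite -/N.
move: zy; rewrite ltr_pdivlMr ?ltr_wpDl //; set w := `|z t - y| => wN.
have w0 : 0 <= w := normr_ge0 _.
have : (w * (N + 1)) ^+ 2 < eps ^+ 2.
  by rewrite ltrXn2r // ?nnegrE ?mulr_ge0 ?addr_ge0 // ltW.
nra.
Qed.

Section Convergence.
Variables (R : realType) (n d m : nat).
Variables (tl hd : 'I_m -> 'I_n) (dist : 'I_m -> R) (Eo : {set 'I_m}).
Variable phat : 'I_n -> 'rV[R]_d.
Hypothesis tl_neq_hd : forall k, tl k != hd k.
Hypothesis edge_uniq : forall k l, [set tl k; hd k] = [set tl l; hd l] -> k = l.

Local Notation H := (incidence R tl hd).
Local Notation V := (potential tl hd dist Eo phat).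
Local Notation F := (closed_loop tl hd dist Eo phat).
Local Notation G := (grad_term tl hd dist Eo phat).
Local Notation O := (O_set tl hd dist Eo phat).
Local Notation U := (edge_potential tl hd dist Eo phat).
Local Notation A := (edge_field tl hd dist Eo phat).
Local Notation Fz := (edge_flow tl hd dist Eo phat).

Let cH := mx_abs_sum H * mx_abs_sum H^T.

Let cH_ge0 : 0 <= cH. Proof. by rewrite mulr_ge0 ?mx_abs_sum_ge0. Qed.

Lemma mx_norm_incidence_gram_le (X : 'M[R]_(m, d)) : `|H *m (H^T *m X)| <= cH * `|X|.
Proof.
apply: le_trans (mx_norm_mulmx_le _ _) _.
by rewrite /cH -mulrA ler_wpM2l ?mx_abs_sum_ge0 // mx_norm_mulmx_le.
Qed.

Lemma mx_norm_edge_flowB_le z z' : `|Fz z - Fz z'| <= cH * `|A z - A z'|.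
Proof.
by rewrite /edge_flow -opprD normrN -!mulmxBr mx_norm_incidence_gram_le.
Qed.

Lemma edge_flow_O z : O z -> Fz z = 0.
Proof.
by case=> P [-> GP]; rewrite /edge_flow -grad_termE // GP mulmx0 oppr0.
Qed.

Lemma mx_norm_grad_continuous : continuous (fun z => `|H^T *m A z|).
Proof.
apply: locally_lipschitz_continuous => z.
have [L L0 AL] := edge_field_lipschitz tl hd dist Eo phat (`|z| + 1).
exists (mx_abs_sum H^T * L); first by rewrite mulr_ge0 ?mx_abs_sum_ge0.
exists 1 => // y zy; apply: le_trans (ler_dist_dist _ _) _.
rewrite -mulmxBr -mulrA; apply: le_trans (mx_norm_mulmx_le _ _) _.
rewrite ler_wpM2l ?mx_abs_sum_ge0 // AL ?lerDl //.
have := ler_normB z (z - y); rewrite opprB addrC subrK; lra.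
Qed.

(* The admissible [z] form a compact set on which the gradient does not vanish. *)
Lemma mx_norm_grad_bounded_below B e : 0 < e -> exists2 delta, 0 < delta &
  forall z, (exists P, z = H *m P) -> `|z| <= B ->
    (forall y, O y -> e <= `|z - y|) -> delta <= `|H^T *m A z|.
Proof.
move=> e0; pose K := [set z : 'M[R]_(m, d) | exists P, z = H *m P]
  `&` [set z | `|z| <= B] `&` \bigcap_(y in O) [set z | e <= `|z - y|].
have Kcl : closed K.
  apply: closedI; first apply: closedI; first exact: mulmx_range_closed.
    exact: (continuous_closedP _).1 (@norm_continuous _ _) _ (@closed_le R B).
  apply: closed_bigI => y _.
  exact: (continuous_closedP _).1 (@norm_subr_continuous _ _ y) _ (@closed_ge R e).
have Kcp : compact K.
  by apply: (mx_bounded_closed_compact (B := B)) Kcl => z [[_ zB] _].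
have [|delta delta0 Kdelta] := compact_min_gt0 Kcp
  (continuous_subspaceT mx_norm_grad_continuous).
  move=> z [[[P zP] _] zfar]; rewrite lt_neqAle normr_ge0 andbT eq_sym normr_eq0.
  apply/negP => /eqP grad0; have Oz : O z.
    by exists P; split => //; rewrite grad_termE // /relpos -zP.
  by have /= := zfar z Oz; rewrite subrr normr0; lra.
by exists delta => // z zP zB zfar; apply: Kdelta.
Qed.

Section Trajectory.
Variable p : R -> 'M[R]_(n, d).
Hypothesis p_sol : fwd_solution tl hd dist Eo phat p.

Lemma solution_derive (t : R) : 0 < t -> is_derive t (1 : R) p (F (p t)).
Proof. exact: p_sol.2. Qed.

Lemma solution_continuous_at (t : R) : 0 < t -> {for t, continuous p}.
Proof.
move/solution_derive => pd; apply: differentiable_continuous.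
by apply/derivable1_diffP; exact: ex_derive.
Qed.

Lemma solution_within_continuous (W : normedModType R) (g : 'M[R]_(n, d) -> W) a b :
  continuous g -> 0 <= a -> a < b -> {within `[a, b], continuous (g \o p)}.
Proof.
move=> gc a0 ab; apply/continuous_within_itvP => //; split.
- move=> x; rewrite in_itv /= => /andP[ax _]; apply: continuous_comp (gc _).
  by apply: solution_continuous_at; exact: le_lt_trans ax.
- move: a0; rewrite le_eqVlt => /orP[/eqP<-|a0].
    exact: cvg_comp p_sol.1 (gc (p 0)).
  apply: cvg_at_right_filter; apply: continuous_comp (gc _).
  exact: solution_continuous_at.
- apply: cvg_at_left_filter; apply: continuous_comp (gc _).
  by apply: solution_continuous_at; exact: le_lt_trans ab.
Qed.

Lemma relpos_solution_derive (t : R) : 0 < t ->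
  is_derive t (1 : R) (fun s => H *m p s) (Fz (H *m p t)).
Proof.
move=> t0; have pd := solution_derive t0; rewrite -relpos_closed_loop //.
have pdiff : differentiable p t by apply/derivable1_diffP; exact: ex_derive.
apply: (is_derive_comp_diff (f := mulmx H) pdiff) pd _.
  exact/linear_differentiable/mulmx_continuous.
by apply: (is_derive_linear (f := mulmx H)); exact: mulmx_continuous.
Qed.

Lemma potential_nonincreasing (s t : R) : 0 <= s -> s <= t -> V (p t) <= V (p s).
Proof.
move=> s0; rewrite le_eqVlt => /orP[/eqP->//|st].
have pos x : x \in `]s, t[%R -> 0 < x by rewrite in_itv /= => /andP[sx _]; lra.
have Vd x xst :=
  is_derive_potential_solution tl_neq_hd edge_uniq (solution_derive (pos x xst)).
apply: (@ler0_derive1_le_cc _ (V \o p) s t) => //.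
- by move=> x xst; have Vdx := Vd x xst; exact: ex_derive.
- move=> x xst; rewrite derive1E (@derive_val _ _ _ _ _ _ _ (Vd x xst)) oppr_le0.
  exact: frob_sqnorm_ge0.
- by apply: solution_within_continuous s0 st; exact: continuous_potential.
- by rewrite in_itv /= lexx ltW.
- by rewrite in_itv /= lexx ltW.
- exact: ltW.
Qed.

Let zB := 2 + 4 * V (p 0) + \sum_k dist k ^+ 2.

Lemma relpos_solution_bounded (t : R) : 0 <= t -> `|H *m p t| <= zB.
Proof.
move=> t0; apply: (@mx_norm_le_of_edge_potential_le _ _ _ _ _ _ _ _ phat).
by have := potential_nonincreasing (lexx 0) t0; rewrite potentialE //; apply.
Qed.

Lemma relpos_solution_velocity_bounded :
  exists2 M, 0 < M & forall u, 0 <= u -> `|Fz (H *m p u)| <= M.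
Proof.
have [L L0 AL] := edge_field_lipschitz tl hd dist Eo phat zB.
have zB0 : 0 <= zB := le_trans (normr_ge0 _) (relpos_solution_bounded (lexx 0)).
exists (cH * (L * zB + `|A 0|) + 1) => [|u u0].
  by rewrite ltr_wpDl // mulr_ge0 // addr_ge0 // mulr_ge0.
have zu := relpos_solution_bounded u0.
have AzB : `|A (H *m p u) - A 0| <= L * zB.
  by apply: le_trans (AL _ _ zu _) _; rewrite ?normr0 // subr0 ler_wpM2l.
have Az : `|A (H *m p u)| <= L * zB + `|A 0|.
  by have := ler_normD (A (H *m p u) - A 0) (A 0); rewrite subrK; lra.
rewrite /edge_flow normrN; apply: le_trans (mx_norm_incidence_gram_le _) _.
have := ler_wpM2l cH_ge0 Az; lra.
Qed.

Lemma relpos_solution_stationary :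
  O (H *m p 0) -> forall t, 0 <= t -> H *m p t = H *m p 0.
Proof.
move=> O0; have [L L0 AL] := edge_field_lipschitz tl hd dist Eo phat zB.
apply: (mx_curve_stationary (dz := fun t => Fz (H *m p t)) (L := cH * L)) => //.
- by rewrite mulr_ge0.
- by move=> a b a0 ab; apply: solution_within_continuous a0 ab; exact: mulmx_continuous.
- exact: relpos_solution_derive.
move=> t t0; rewrite -[Fz _]subr0 -(edge_flow_O O0) -mulrA.
apply: le_trans (mx_norm_edge_flowB_le _ _) _; rewrite ler_wpM2l //.
by apply: AL; apply: relpos_solution_bounded => //; exact: ltW.
Qed.

(* Along a time interval of length [e / M] the relative positions move by at
   most [e], so a point [2 e]-far from [O] stays [e]-far from it and the
   potential decreases at rate at least [delta ^+ 2]. *)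
Lemma potential_drop_far eps : 0 < eps -> exists2 tau, 0 < tau & exists2 c, 0 < c &
  forall t, 0 < t -> (forall y, O y -> eps <= `|H *m p t - y|) ->
    V (p (t + tau)) <= V (p t) - c.
Proof.
move=> eps0; set e := eps / 2; have e0 : 0 < e by rewrite divr_gt0.
have [delta delta0 grad_ge] := mx_norm_grad_bounded_below zB e0.
have [M M0 Mvel] := relpos_solution_velocity_bounded.
have tau0 : 0 < e / M by rewrite divr_gt0.
exists (e / M) => //; exists (delta ^+ 2 * (e / M)); first by rewrite mulr_gt0 ?exprn_gt0.
move=> t t0 tfar; set tau := e / M in tau0 *; have ttau : t < t + tau by rewrite ltrDl.
have pos x : x \in `]t, t + tau[%R -> 0 < x by rewrite in_itv /= => /andP[tx _]; lra.
have [x xI Veq] := MVT ttau (fun x xI =>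
  is_derive_potential_solution tl_neq_hd edge_uniq (solution_derive (pos x xI)))
  (solution_within_continuous (continuous_potential tl_neq_hd) (ltW t0) ttau).
move: xI; rewrite in_itv /= => /andP[tx xt].
have near_t : `|H *m p x - H *m p t| <= e.
  apply: le_trans (mx_curve_increment_le (z := fun u => H *m p u)
    (dz := fun u => Fz (H *m p u)) (M := M) tx _ _ _) _.
  - by apply: solution_within_continuous (ltW t0) tx; exact: mulmx_continuous.
  - by move=> u; rewrite in_itv /= => /andP[tu _]; apply: relpos_solution_derive; lra.
  - by move=> u; rewrite in_itv /= => /andP[tu _]; apply: Mvel; lra.
  have : x - t <= tau by lra.
  by rewrite /tau ler_pdivlMr // mulrC.
have delta_le : delta <= `|G (p x)|.
  rewrite grad_termE //; apply: grad_ge.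
  - by exists (p x).
  - by apply: relpos_solution_bounded; lra.
  move=> y Oy; have := tfar y Oy; move: near_t.
  have := ler_normD (H *m p t - H *m p x) (H *m p x - y).
  rewrite addrA subrK (distrC (H *m p t) (H *m p x)) /relpos /e; lra.
have := mx_norm_sqr_le_frob (G (p x)).
have : delta ^+ 2 <= `|G (p x)| ^+ 2 by rewrite lerXn2r ?nnegrE ?normr_ge0 // ltW.
move: Veq; rewrite /= (addrC t tau) addrK; nra.
Qed.

Lemma relpos_solution_near_O eps : 0 < eps ->
  \forall t \near +oo, exists2 y, O y & `|H *m p t - y| < eps.
Proof.
move=> eps0; have [tau tau0 [c c0 drop]] := potential_drop_far eps0.
apply: contrapT => not_near.
have far_after (T : R) : exists2 t, T < t & forall y, O y -> eps <= `|H *m p t - y|.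
  apply: contrapT => none; apply: not_near; exists T; split; first exact: num_real.
  move=> t Tt; apply: contrapT => tnear; apply: none; exists t => // y Oy.
  by rewrite leNgt; apply/negP => zy; apply: tnear; exists y.
have descent (j : nat) : exists2 t, 0 <= t & V (p t) <= V (p 0) - j%:R * c.
  elim: j => [|j [tj tj0 Vtj]]; first by exists 0 => //; rewrite mul0r subr0.
  have [t tjt tfar] := far_after tj.
  exists (t + tau); first by rewrite addr_ge0 ?ltW //; lra.
  have := drop t (le_lt_trans tj0 tjt) tfar.
  have := potential_nonincreasing tj0 (ltW tjt).
  rewrite -natr1 mulrDl mul1r; lra.
have V_ge0 t : 0 <= V (p t) by rewrite potentialE // edge_potential_ge0.
have [t _ Vt] := descent (Num.Def.archi_bound (V (p 0) / c)).
have := archi_boundP (divr_ge0 (V_ge0 0) (ltW c0)); rewrite ltr_pdivrMr //.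
by have := V_ge0 t; lra.
Qed.

End Trajectory.
Lemma O_set_invariant : z_invariant tl hd dist Eo phat O.
Proof.
split=> [q q_sol Oq t t0|z0 [P [z0P GP]]].
  by rewrite /relpos (relpos_solution_stationary q_sol Oq t0).
exists (fun _ => P); split; last by split => // t; exists P.
by move=> t; rewrite /closed_loop GP oppr0; exact: is_derive_cst.
Qed.

Lemma O_set_sub_largest_invariant : O `<=` largest_invariant_in_O tl hd dist Eo phat.
Proof. by move=> z Oz; exists O; split; [exact: O_set_invariant|split]. Qed.

End Convergence.

Theorem theorem2 (R : realType) (n d m : nat)
  (tl hd : 'I_m -> 'I_n) (dist : 'I_m -> R) (Eo : {set 'I_m})
  (phat : 'I_n -> 'rV[R]_d) :
  (d = 2 \/ d = 3)%N -> (2 <= n)%N ->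
  (* simple undirected graph: no self loops, no repeated edges *)
  (forall k, tl k != hd k) ->
  (forall k l, [set tl k; hd k] = [set tl l; hd l] -> k = l) ->
  (forall k, 0 < dist k) ->
  (* desired relative positions of orientation edges have length d_k *)
  (forall k, k \in Eo -> enorm (phat (hd k) - phat (tl k)) = dist k) ->
  let H := incidence R tl hd : 'M[R]_(m, n) in
  let F := closed_loop tl hd dist Eo phat in
  let V := potential tl hd dist Eo phat in
  let G := grad_term tl hd dist Eo phat in
  (* (1) gradient descent flow: pdot = - grad V *)
  (forall P : 'M[R]_(n, d), differentiable V P /\
     forall h : 'M[R]_(n, d), is_derive P h V (- frob_dot (F P) h)) /\
  (* (2) Vdot = - || R^T e + (L_o (x) I_d) pbar ||^2 <= 0 along solutions *)
  (forall (p : R -> 'M[R]_(n, d)) (t : R),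
     is_derive t (1 : R) p (F (p t)) ->
     is_derive t (1 : R) (V \o p) (- frob_sqnorm (G (p t))) /\
     - frob_sqnorm (G (p t)) <= 0) /\
  (* (3) the induced z-dynamics is self-contained *)
  (exists Fz : 'M[R]_(m, d) -> 'M[R]_(m, d),
     forall P : 'M[R]_(n, d), H *m F P = Fz (H *m P)) /\
  (* (4) z(t) = (H (x) I_d) p(t) converges to the largest invariant set in O *)
  (forall p : R -> 'M[R]_(n, d),
     fwd_solution tl hd dist Eo phat p ->
     converges_to_set (fun t => H *m p t)
       (largest_invariant_in_O tl hd dist Eo phat)).
Proof.
move=> _ _ tl_neq_hd edge_uniq _ _ H F V G.
split.
  by move=> P; split; [exact: differentiable_potential|exact: is_derive_potential].
split.
  move=> p t pd; split; first exact: is_derive_potential_solution.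
  by rewrite oppr_le0 frob_sqnorm_ge0.
split; first by exists (edge_flow tl hd dist Eo phat) => P; exact: relpos_closed_loop.
move=> p p_sol; apply: converges_to_set_mx_norm => eps eps0.
apply: filterS (relpos_solution_near_O tl_neq_hd edge_uniq p_sol eps0) => t [y Oy zy].
by exists y => //; exact: O_set_sub_largest_invariant.
Qed.
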